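(* Let $\Omega=\{r<0\}\subset\mathbb C^2$ with $r$ a smooth defining function that is plurisubharmonic on the boundary. Let $X$ be a smooth real-valued function, $P=1+X$, $K\in\mathbb R$, and $\rho=r(1+Kr+X)$. If $p\in b\Omega$ is a weakly pseudoconvex point (i.e. $\mathcal L_r(p)=0$) and the complex Hessian of $\rho$ is positive semidefinite at $p$, then $$B_P(p)=\big(4\,\mathrm{Re}[r_zP_{\bar z}]\,\mathrm{Re}[r_wP_{\bar w}]-|r_zP_{\bar w}+r_{\bar w}P_z|^2\big)\big|_p=0.$$
   Context: Coordinates $(z,w)$ on $\mathbb C^2$; subscripts denote partial derivatives; $b\Omega=\{r=0\}$ with $\nabla r\neq0$ there. For real $C^2$ $f$, $H_f=\begin{pmatrix} f_{z\bar z}& f_{z\bar w}\\ f_{\bar z w}& f_{w\bar w}\end{pmatrix}$, acting on $V,W\in\mathbb C^2$ by $H_f(V,W)=f_{z\bar z}V_1\bar W_1+f_{w\bar w}V_2\bar W_2+f_{z\bar w}V_1\bar W_2+f_{\bar z w}V_2\bar W_1$. $L_r$ is the vector $(r_w,-r_z)$ and the Levi form is $\mathcal L_r(p)=H_r(L_r,L_r)(p)$. ''$r$ plurisubharmonic on the boundary'' means $H_r(p)$ is positive semidefinite for all $p\in b\Omega$. *)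

From HB Require Import structures.
From mathcomp Require Import all_boot all_order all_algebra.
From mathcomp Require Import all_classical all_reals all_analysis.
From mathcomp Require Import complex.
Set Implicit Arguments. Unset Strict Implicit. Unset Printing Implicit Defensive.
Import Order.TTheory GRing.Theory Num.Theory.
Import numFieldNormedType.Exports.
Local Open Scope ring_scope.

(* C^2 is identified with R^4 = 'rV[R]_4 via
   (z, w) = (x1 + i y1, x2 + i y2) <-> (x1, y1, x2, y2),
   coordinate indices 0 = x1, 1 = y1, 2 = x2, 3 = y2. *)
Section Defs.
Variable R : realType.
Local Notation V := 'rV[R]_4.

Definition evec (i : 'I_4) : V := delta_mx 0 i.

Definition rpart (f : V -> R) (i : 'I_4) : V -> R := fun p => 'D_(evec i) f p.

Fixpoint Ck (k : nat) (f : V -> R) : Prop :=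
  match k with
  | 0 => continuous f
  | k'.+1 => (forall p, differentiable f p) /\ forall i, Ck k' (rpart f i)
  end.
Definition smooth (f : V -> R) : Prop := forall k, Ck k f.

Definition i0 : 'I_4 := @Ordinal 4 0 isT.
Definition i1 : 'I_4 := @Ordinal 4 1 isT.
Definition i2 : 'I_4 := @Ordinal 4 2 isT.
Definition i3 : 'I_4 := @Ordinal 4 3 isT.

Definition d_z (f : V -> R) p : R[i] := Complex (rpart f i0 p / 2) (- (rpart f i1 p / 2)).
Definition d_zb (f : V -> R) p : R[i] := Complex (rpart f i0 p / 2) (rpart f i1 p / 2).
Definition d_w (f : V -> R) p : R[i] := Complex (rpart f i2 p / 2) (- (rpart f i3 p / 2)).
Definition d_wb (f : V -> R) p : R[i] := Complex (rpart f i2 p / 2) (rpart f i3 p / 2).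

Definition rpart2 (f : V -> R) (i j : 'I_4) : V -> R := rpart (rpart f j) i.

Definition d_zzb (f : V -> R) p : R[i] :=
  Complex ((rpart2 f i0 i0 p + rpart2 f i1 i1 p) / 4) 0.
Definition d_wwb (f : V -> R) p : R[i] :=
  Complex ((rpart2 f i2 i2 p + rpart2 f i3 i3 p) / 4) 0.
(* f_{z wbar} = (1/4)(d_x1 - i d_y1)(d_x2 + i d_y2) f *)
Definition d_zwb (f : V -> R) p : R[i] :=
  Complex ((rpart2 f i0 i2 p + rpart2 f i1 i3 p) / 4)
          ((rpart2 f i0 i3 p - rpart2 f i1 i2 p) / 4).
(* f_{zbar w} = (1/4)(d_x1 + i d_y1)(d_x2 - i d_y2) f *)
Definition d_zbw (f : V -> R) p : R[i] :=
  Complex ((rpart2 f i0 i2 p + rpart2 f i1 i3 p) / 4)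
          ((rpart2 f i1 i2 p - rpart2 f i0 i3 p) / 4).

Definition Hform (f : V -> R) p (V1 V2 W1 W2 : R[i]) : R[i] :=
  d_zzb f p * V1 * conjc W1 + d_wwb f p * V2 * conjc W2
  + d_zwb f p * V1 * conjc W2 + d_zbw f p * V2 * conjc W1.

Definition Hess_psd (f : V -> R) p : Prop :=
  forall V1 V2 : R[i], 0 <= Hform f p V1 V2 V1 V2.

Definition Levi (r : V -> R) p : R[i] :=
  Hform r p (d_w r p) (- d_z r p) (d_w r p) (- d_z r p).

Definition B_P (r P : V -> R) p : R[i] :=
  4%:R * 'Re (d_z r p * d_zb P p) * 'Re (d_w r p * d_wb P p)
  - `| d_z r p * d_wb P p + d_wb r p * d_z P p | ^+ 2.

End Defs.

From HB Require Import structures.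
From mathcomp Require Import all_boot all_order all_algebra.
From mathcomp Require Import all_classical all_reals all_analysis.
From mathcomp Require Import complex.
From mathcomp Require Import ring.
Import Order.TTheory GRing.Theory Num.Theory.
Local Open Scope ring_scope.
Local Notation "x %:C" := (real_complex _ x) (format "x %:C").

(* Proof of Lemma 4.5.  Write P = 1 + X and g = K r + X, so that
   rho = r (P + K r) = r (1 + g).  At a boundary point p (r(p) = 0) the
   product rule gives the complex Hessian
     H_rho(V, W) = P(p) H_r(V, W) + dr(V) conj(dg(W)) + dg(V) conj(dr(W)),
   where df(V) = f_z V1 + f_w V2 is the holomorphic differential.
   The Levi vector L = (r_w, -r_z) is complex tangent: dr(L) = 0.
   A positive semidefinite Hermitian form vanishing on a vector L vanishes
   on every pair (L, W).  Applied to H_r (psh on the boundary, L_r(p) = 0)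
   this gives H_r(L, .) = 0, hence H_rho(L, L) = 0, and applied to H_rho it
   gives 0 = H_rho(L, W) = dX(L) conj(dr(W)) for all W.  Taking
   W = (conj r_z, conj r_w), for which dr(W) = |grad r|^2 / 4 <> 0, yields
   dX(L) = 0.  Finally B_P is identically - |dP(L)|^2 and dP = dX. *)

Section HermitianForm.
Variable C : numClosedFieldType.

Definition sesq (a c b V1 V2 W1 W2 : C) : C :=
  a * V1 * W1^* + c * V2 * W2^* + b * V1 * W2^* + b^* * V2 * W1^*.

Lemma sesq_shift (a c b V1 V2 W1 W2 t : C) :
  sesq a c b (V1 + t * W1) (V2 + t * W2) (V1 + t * W1) (V2 + t * W2) =
  sesq a c b V1 V2 V1 V2 + t^* * sesq a c b V1 V2 W1 W2
  + t * sesq a c b W1 W2 V1 V2 + t * t^* * sesq a c b W1 W2 W1 W2.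
Proof. by rewrite /sesq !rmorphD !rmorphM; ring. Qed.

Lemma sesq_conj (a c b V1 V2 W1 W2 : C) : a^* = a -> c^* = c ->
  sesq a c b W1 W2 V1 V2 = (sesq a c b V1 V2 W1 W2)^*.
Proof. by move=> ha hc; rewrite /sesq !rmorphD !rmorphM /= !conjCK ha hc; ring. Qed.

(* A nonnegative quantity n whose quadratic s n (s d - 2) stays nonnegative
   for all s > 0 must vanish: take s = 1 / (1 + d). *)
Lemma ge0_quad_eq0 (n d : C) : 0 <= n -> 0 <= d ->
  (forall s, 0 < s -> 0 <= s * n * (s * d - 2)) -> n = 0.
Proof.
move=> n0 d0 hs; set s := (1 + d)^-1.
have s0 : 0 < s by rewrite invr_gt0 ltr_wpDr.
have sd_lt1 : s * d < 1 by rewrite mulrC ltr_pdivrMr ?mul1r ?ltrDr // ltr_wpDr.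
have neg : s * d - 2 < 0 by rewrite subr_lt0 (lt_trans sd_lt1) // ltr1n.
have := hs s s0; rewrite -mulrA pmulr_rge0 // nmulr_lge0 // => n_le0.
by apply/eqP; rewrite eq_le n_le0 n0.
Qed.

Lemma sesq_null (a c b L1 L2 W1 W2 : C) : a^* = a -> c^* = c ->
  (forall V1 V2, 0 <= sesq a c b V1 V2 V1 V2) ->
  sesq a c b L1 L2 L1 L2 = 0 -> sesq a c b L1 L2 W1 W2 = 0.
Proof.
move=> ha hc psd hL; set h := sesq a c b L1 L2 W1 W2.
suff : h * h^* = 0 by move/eqP; rewrite mulf_eq0 conjC_eq0 orbb => /eqP.
apply: (@ge0_quad_eq0 _ (sesq a c b W1 W2 W1 W2)); rewrite ?mul_conjC_ge0 ?psd //.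
move=> s s0; have := psd (L1 + - (s * h) * W1) (L2 + - (s * h) * W2).
rewrite sesq_shift (@sesq_conj a c b L1 L2 W1 W2) // -/h hL.
rewrite rmorphN rmorphM /= (geC0_conj (ltW s0)) => /le_trans; apply.
by rewrite le_eqVlt; apply/orP; left; apply/eqP; ring.
Qed.

Lemma sesq_rank_two (k a c b a' c' b' z w z' w' V1 V2 W1 W2 : C) : k^* = k ->
  a' = k * a + (z * z'^* + z' * z^*) -> c' = k * c + (w * w'^* + w' * w^*) ->
  b' = k * b + (z * w'^* + z' * w^*) ->
  sesq a' c' b' V1 V2 W1 W2 = k * sesq a c b V1 V2 W1 W2
    + (z * V1 + w * V2) * (z' * W1 + w' * W2)^*
    + (z' * V1 + w' * V2) * (z * W1 + w * W2)^*.
Proof.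
move=> hk -> -> ->.
by rewrite /sesq !rmorphD !rmorphM /= !conjCK hk; ring.
Qed.

End HermitianForm.
Arguments sesq {C}.

Section Wirtinger.
Context {R : realType}.
Local Notation V := 'rV[R]_4.
Implicit Types (f g h : V -> R) (p : V).

Lemma d_zb_conj f p : d_zb f p = (d_z f p)^*.
Proof. by rewrite /d_zb /d_z -[RHS]/(conjc _) /= opprK. Qed.

Lemma d_wb_conj f p : d_wb f p = (d_w f p)^*.
Proof. by rewrite /d_wb /d_w -[RHS]/(conjc _) /= opprK. Qed.

Lemma Hform_sesq f p V1 V2 W1 W2 :
  Hform f p V1 V2 W1 W2 = sesq (d_zzb f p) (d_wwb f p) (d_zwb f p) V1 V2 W1 W2.
Proof.
rewrite /Hform /sesq; suff -> : d_zbw f p = (d_zwb f p)^* by [].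
by rewrite /d_zbw /d_zwb -[RHS]/(conjc _) /= -mulNr opprB.
Qed.

Lemma d_zzb_real f p : (d_zzb f p)^* = d_zzb f p.
Proof. by rewrite /d_zzb -[LHS]/(conjc _) /= oppr0. Qed.

Lemma d_wwb_real f p : (d_wwb f p)^* = d_wwb f p.
Proof. by rewrite /d_wwb -[LHS]/(conjc _) /= oppr0. Qed.

Lemma Hform_null f p L1 L2 W1 W2 : Hess_psd f p ->
  Hform f p L1 L2 L1 L2 = 0 -> Hform f p L1 L2 W1 W2 = 0.
Proof.
move=> psd; rewrite !Hform_sesq; apply: sesq_null.
- exact: d_zzb_real.
- exact: d_wwb_real.
- by move=> V1 V2; rewrite -Hform_sesq.
Qed.

Definition dcx f p (V1 V2 : R[i]) : R[i] := d_z f p * V1 + d_w f p * V2.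

Lemma Hform_rank_two g f h (c : R) p V1 V2 W1 W2 :
  (forall i j, rpart2 g i j p =
     c * rpart2 f i j p + (rpart f i p * rpart h j p + rpart h i p * rpart f j p)) ->
  Hform g p V1 V2 W1 W2 = c%:C * Hform f p V1 V2 W1 W2
    + dcx f p V1 V2 * (dcx h p W1 W2)^* + dcx h p V1 V2 * (dcx f p W1 W2)^*.
Proof.
move=> hg; rewrite !Hform_sesq; apply: sesq_rank_two; first exact: conjc_real.
all: rewrite -?d_zb_conj -?d_wb_conj /d_zzb /d_wwb /d_zwb !hg.
all: apply/eqP; rewrite eq_complex /=.
(* Abstracting the derivatives lets [field] treat them as atoms. *)
all: move: (rpart f) (rpart h) (rpart2 f) => F H F2.
all: by apply/andP; split; apply/eqP; field.
Qed.

Lemma dcx_tangent f p : dcx f p (d_w f p) (- d_z f p) = 0.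
Proof. by rewrite /dcx mulrN mulrC subrr. Qed.

Lemma dcx_conj_grad_neq0 {f p} : (exists i, rpart f i p != 0) ->
  dcx f p (d_zb f p) (d_wb f p) != 0.
Proof.
move=> [i fi]; have -> : dcx f p (d_zb f p) (d_wb f p) =
    ((rpart f i0 p ^+ 2 + rpart f i1 p ^+ 2 + rpart f i2 p ^+ 2
      + rpart f i3 p ^+ 2) / 4)%:C.
  rewrite /dcx /d_z /d_zb /d_w /d_wb; move: (rpart f) => F.
  by apply/eqP; rewrite eq_complex /=; apply/andP; split; apply/eqP; field.
have sum_sq : \sum_k rpart f k p ^+ 2 =
    rpart f i0 p ^+ 2 + rpart f i1 p ^+ 2 + rpart f i2 p ^+ 2 + rpart f i3 p ^+ 2.
  by rewrite !big_ord_recr big_ord0 /= add0r.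
rewrite -sum_sq (inj_eq (@complexI R)) mulf_eq0 invr_eq0 pnatr_eq0 orbF.
apply: contra fi => /eqP /psumr_eq0P sum0.
by rewrite -sqrf_eq0 sum0 // => k _; exact: sqr_ge0.
Qed.

Lemma B_P_eq f P p : B_P f P p = - `|dcx P p (d_w f p) (- d_z f p)| ^+ 2.
Proof.
rewrite /B_P /dcx /d_z /d_zb /d_w /d_wb -!complexRe -!add_Re2_Im2 /=.
move: (rpart f) (rpart P) => F G.
apply/eqP; rewrite eq_complex /=.
by apply/andP; split; apply/eqP; field.
Qed.

Lemma dcx_eq {f g p V1 V2} : (forall i, rpart f i p = rpart g i p) ->
  dcx f p V1 V2 = dcx g p V1 V2.
Proof. by move=> hfg; rewrite /dcx /d_z /d_w !hfg. Qed.

Lemma dcx_lin {K : R} {f g h p V1 V2} :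
  (forall i, rpart h i p = K * rpart f i p + rpart g i p) ->
  dcx h p V1 V2 = K%:C * dcx f p V1 V2 + dcx g p V1 V2.
Proof.
move=> hh; rewrite /dcx /d_z /d_w !hh.
move: (rpart f) (rpart g) => F G.
case: V1 V2 => [a b] [c d]; apply/eqP; rewrite eq_complex /=.
by apply/andP; split; apply/eqP; field.
Qed.

End Wirtinger.

Section RealCalculus.
Context {R : realType}.
Local Notation V := 'rV[R]_4.
Implicit Types (f g h : V -> R).

Lemma smooth_derivable f q v : smooth f -> derivable f q v.
Proof. by move=> sf; have [df _] := sf 1%N; exact: diff_derivable. Qed.

Lemma smooth_rpart f i : smooth f -> smooth (rpart f i).
Proof. by move=> sf k; have [_ ] := sf k.+1; apply. Qed.

Lemma rpart_cst (c : R) i q : rpart (fun _ => c) i q = 0.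
Proof. exact: derive_cst. Qed.

Lemma rpart_add {f g i q} : derivable f q (evec R i) -> derivable g q (evec R i) ->
  rpart (fun x => f x + g x) i q = rpart f i q + rpart g i q.
Proof. exact: deriveD. Qed.

Lemma rpart_mul {f g i q} : derivable f q (evec R i) -> derivable g q (evec R i) ->
  rpart (fun x => f x * g x) i q = f q * rpart g i q + g q * rpart f i q.
Proof. exact: deriveM. Qed.

Lemma derivable_add {f g} {q v : V} : derivable f q v -> derivable g q v ->
  derivable (fun x => f x + g x) q v.
Proof. exact: (@derivableD _ _ _ f g). Qed.

Lemma derivable_mul {f g} {q v : V} : derivable f q v -> derivable g q v ->
  derivable (fun x => f x * g x) q v.
Proof. exact: (@derivableM _ _ f g). Qed.

Lemma rpart_affine (c K : R) f g i q :
  derivable f q (evec R i) -> derivable g q (evec R i) ->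
  rpart (fun x => c + K * f x + g x) i q = K * rpart f i q + rpart g i q.
Proof.
move=> df dg; have dc := derivable_cst c q (evec R i).
have dKf := derivable_mul (derivable_cst K q (evec R i)) df.
rewrite (rpart_add (derivable_add dc dKf) dg) (rpart_add dc dKf).
rewrite (rpart_mul (derivable_cst K q (evec R i)) df) !rpart_cst.
by rewrite mulr0 addr0 add0r.
Qed.

Section ProductAtZero.
Variables f h : V -> R.
Hypotheses (df : forall q v, derivable f q v) (dh : forall q v, derivable h q v).
Hypotheses (ddf : forall i q v, derivable (rpart f i) q v)
           (ddh : forall i q v, derivable (rpart h i) q v).

Lemma rpart_prod i :
  rpart (fun q => f q * h q) i = fun q => f q * rpart h i q + h q * rpart f i q.
Proof. by apply/funext => q; rewrite rpart_mul. Qed.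

Lemma rpart2_prod_at_zero i j p : f p = 0 ->
  rpart2 (fun q => f q * h q) i j p =
  h p * rpart2 f i j p + (rpart f i p * rpart h j p + rpart h i p * rpart f j p).
Proof.
move=> fp0; rewrite /rpart2 rpart_prod.
have dfhj := derivable_mul (df p (evec R i)) (ddh j p (evec R i)).
have dhfj := derivable_mul (dh p (evec R i)) (ddf j p (evec R i)).
rewrite (rpart_add dfhj dhfj) !rpart_mul //.
by rewrite fp0 mul0r add0r; ring.
Qed.

End ProductAtZero.
End RealCalculus.

Section DefiningFunction.
Context {R : realType}.
Local Notation V := 'rV[R]_4.
Variables (r X : V -> R) (K : R).
Hypotheses (sr : smooth r) (sX : smooth X).

Let dr q v : derivable r q v. Proof. exact: smooth_derivable. Qed.
Let dX q v : derivable X q v. Proof. exact: smooth_derivable. Qed.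
Let ddr i q v : derivable (rpart r i) q v.
Proof. exact/smooth_derivable/smooth_rpart. Qed.
Let ddX i q v : derivable (rpart X i) q v.
Proof. exact/smooth_derivable/smooth_rpart. Qed.

Lemma rpart_factor i q :
  rpart (fun x => 1 + K * r x + X x) i q = K * rpart r i q + rpart X i q.
Proof. exact: rpart_affine. Qed.

Lemma rpart_P i q : rpart (fun x => 1 + X x) i q = rpart X i q.
Proof. by rewrite rpart_add ?rpart_cst ?add0r //; apply: derivable_cst. Qed.

Lemma Hform_rho p V1 V2 W1 W2 : r p = 0 ->
  Hform (fun q => r q * (1 + K * r q + X q)) p V1 V2 W1 W2 =
  (1 + X p)%:C * Hform r p V1 V2 W1 W2
  + dcx r p V1 V2 * (dcx (fun q => 1 + K * r q + X q) p W1 W2)^*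
  + dcx (fun q => 1 + K * r q + X q) p V1 V2 * (dcx r p W1 W2)^*.
Proof.
move=> rp0; apply: Hform_rank_two => i j.
have dh q v : derivable (fun x => 1 + K * r x + X x) q v.
  by apply/derivable_add/dX/derivable_add/derivable_mul/dr; apply: derivable_cst.
have ddh k q v : derivable (rpart (fun x => 1 + K * r x + X x) k) q v.
  rewrite (funext (rpart_factor k)).
  by apply/derivable_add/ddX/derivable_mul/ddr; apply: derivable_cst.
by rewrite rpart2_prod_at_zero // rp0 mulr0 addr0.
Qed.

End DefiningFunction.

Theorem lemma4p5 (R : realType) (r X : 'rV[R]_4 -> R) (K : R) (p : 'rV[R]_4) :
  smooth r ->
  (* r is a defining function: nonvanishing gradient on b Omega = {r = 0} *)
  (forall q, r q = 0 -> exists i, rpart r i q != 0) ->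
  (* r plurisubharmonic on the boundary *)
  (forall q, r q = 0 -> Hess_psd r q) ->
  smooth X ->
  r p = 0 ->
  Levi r p = 0 ->
  Hess_psd (fun q => r q * (1 + K * r q + X q)) p ->
  B_P r (fun q => 1 + X q) p = 0.
Proof.
move=> sr grad_r psh_r sX rp0 levi0 psd_rho.
pose L1 := d_w r p; pose L2 := - d_z r p.
have tangent : dcx r p L1 L2 = 0 := dcx_tangent r p.
have Hr_null W1 W2 : Hform r p L1 L2 W1 W2 = 0.
  exact: Hform_null (psh_r p rp0) levi0.
have Hrho_null W1 W2 :
    Hform (fun q => r q * (1 + K * r q + X q)) p L1 L2 W1 W2 = 0.
  apply: Hform_null psd_rho _.
  by rewrite Hform_rho // Hr_null tangent mulr0 !mul0r conjC0 mulr0 !addr0.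
have dX_L : dcx X p L1 L2 = 0.
  have := Hrho_null (d_zb r p) (d_wb r p).
  rewrite Hform_rho // Hr_null tangent mulr0 !mul0r !add0r.
  rewrite (dcx_lin (rpart_factor r X K sr sX ^~ p)) tangent mulr0 add0r.
  move/eqP; rewrite mulf_eq0 conjC_eq0 (negPf (dcx_conj_grad_neq0 (grad_r p rp0))).
  by rewrite orbF => /eqP.
by rewrite B_P_eq (dcx_eq (rpart_P X sX ^~ p)) dX_L normr0 expr0n oppr0.
Qed.
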